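(* Let $G$ be a connected unicyclic graph with largest vertex degree $\Delta\ge3$ and let $\alpha\in[0,1)$. If $\Delta\ge4$, or $\Delta=3$ and $k(G)\ge4$, then \[ \rho(A_\alpha(G))<\alpha\Delta+2(1-\alpha)\sqrt{\Delta-1}\cos\frac{\pi}{2k(G)+1}. \]
   Context: $A_\alpha(G)=\alpha D(G)+(1-\alpha)A(G)$ ($D$ degree matrix, $A$ adjacency matrix), and $\rho(M)$ is the spectral radius of $M$. A unicyclic graph is a connected graph with exactly one cycle. If $C_r$ is the unique cycle of $G$ with vertices $v_1,\dots,v_r$, removing the edges of $C_r$ leaves a forest of $r$ trees $T_1,\dots,T_r$ rooted at $v_1,\dots,v_r$; the height $h(T_i)$ is the largest distance from $v_i$ to a vertex of $T_i$, and the height of $G$ is $k(G)=\max_{1\le i\le r}h(T_i)+1$. *)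

From mathcomp Require Import all_boot.
From Stdlib Require Import Reals.
Set Implicit Arguments. Unset Strict Implicit. Unset Printing Implicit Defensive.

Section Graphs.
Variable V : finType.
Variable e : rel V.

Definition simple_graph : Prop := irreflexive e /\ symmetric e.

Definition connected : Prop := forall x y : V, connect e x y.

Definition is_cycle (c : seq V) : bool := [&& uniq c, 2 < size c & cycle e c].

Definition cyc_edge (c : seq V) (x y : V) : bool :=
  ((x \in c) && (next c x == y)) || ((y \in c) && (next c y == x)).

(* connected with exactly one cycle (cycles identified by their edge sets) *)
Definition unicyclic : Prop :=
  connected /\ exists c, is_cycle c /\
    forall c', is_cycle c' -> forall x y, cyc_edge c' x y = cyc_edge c x y.

Definition deg (v : V) : nat := #|[pred u | e v u]|.
Definition max_deg : nat := \max_(v : V) deg v.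

(* graph distance w.r.t. a relation r (number of edges of a shortest walk) *)
Definition walk_len (r : rel V) (x y : V) (n : nat) : bool :=
  [exists p : n.-tuple V, path r x p && (last x p == y)].
Definition dist (r : rel V) (x y : V) : nat :=
  find (walk_len r x y) (iota 0 #|V|).

Definition forest_rel (c : seq V) : rel V := fun x y => e x y && ~~ cyc_edge c x y.

Definition tree_height (c : seq V) (v : V) : nat :=
  \max_(u | connect (forest_rel c) v u) dist (forest_rel c) v u.

(* k(G) = max_i h(T_i) + 1 *)
Definition height (c : seq V) : nat := (\max_(v | v \in c) tree_height c v).+1.

Local Open Scope R_scope.

Definition A_alpha (alpha : R) (u v : V) : R :=
  (if u == v then alpha * INR (deg u) else 0) +
  (1 - alpha) * (if e u v then 1 else 0).

Definition mxv (M : V -> V -> R) (x : V -> R) (u : V) : R :=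
  \big[Rplus/0]_(v : V) (M u v * x v).

(* a + i b is a (complex) eigenvalue of M, with eigenvector x + i y <> 0 *)
Definition is_eigenvalue (M : V -> V -> R) (a b : R) : Prop :=
  exists x y : V -> R, (exists v, x v <> 0 \/ y v <> 0) /\
    forall u, mxv M x u = a * x u - b * y u /\ mxv M y u = b * x u + a * y u.

(* rho(M) < r : every eigenvalue has modulus < r (the spectrum is finite,
   so this is exactly the statement that the spectral radius is < r) *)
Definition spectral_radius_lt (M : V -> V -> R) (r : R) : Prop :=
  forall a b, is_eigenvalue M a b -> sqrt (a * a + b * b) < r.

End Graphs.

From Pilot Require Import Defs.
From mathcomp Require Import all_boot all_order all_algebra zify Rstruct.
From Stdlib Require Import Reals Lra Lia Psatz.
From Coquelicot Require Import Complex.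

(* Let Delta be the maximum degree, k the height, s = sqrt (Delta - 1), theta = PI / (2k + 1),
   and give a vertex at distance d from the cycle the weight g d = cos ((2d + 1) theta / 2) / s^d,
   which is positive for d < k and satisfies g d + (Delta - 1) g (d + 2) = 2 s cos theta g (d + 1).
   Every edge off the cycle is a bridge, so a vertex off the cycle has at most one neighbour that is
   not deeper, and a cycle vertex at most two; hence f u = g (depth u) satisfies A_alpha f <= r f
   for the claimed bound r, strictly on the cycle when Delta >= 4, or Delta = 3 and k >= 4.
   A positive subinvariant vector bounds every eigenvalue lambda: the modulus |z| of an eigenvector
   satisfies |lambda| |z| <= A_alpha |z|, and if |lambda| >= r, equality at a vertex maximising
   |z| / f spreads along edges to the cycle, where A_alpha f < r f. *)

Set Implicit Arguments. Unset Strict Implicit. Unset Printing Implicit Defensive.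
Import GRing.Theory Num.Theory.
Local Open Scope R_scope.

Lemma INR_fact_eval n (z : Z) : Z.of_nat (Factorial.fact n) = z -> INR (Factorial.fact n) = IZR z.
Proof. by rewrite INR_IZR_INZ => ->. Qed.

(* Otherwise 8/5 < PI/2, so cos (8/5) > 0, against its degree-8 Taylor upper bound. *)
Lemma PI_le_16_5 : PI <= 16/5.
Proof.
case: (Rle_lt_dec PI (16/5)) => // hPI; exfalso.
have cos_pos : 0 < cos (8/5) by apply: cos_gt_0; lra.
have := proj2 (cos_bound (8/5) 1 ltac:(lra) ltac:(lra)).
rewrite /cos_approx /cos_term; cbn [sum_f_R0 Nat.mul Nat.add pow].
rewrite (@INR_fact_eval 0 1) // (@INR_fact_eval 2 2) // (@INR_fact_eval 4 24) //.
rewrite (@INR_fact_eval 6 720) // (@INR_fact_eval 8 40320); last by vm_compute.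
lra.
Qed.

Lemma cos_ge_1_sub_sqr_half x : 0 <= x <= PI / 2 -> 1 - x * x / 2 <= cos x.
Proof.
move=> hx; have := proj1 (cos_bound x 0 ltac:(lra) ltac:(lra)).
rewrite /cos_approx /cos_term; cbn [sum_f_R0 Nat.mul Nat.add pow].
by rewrite (@INR_fact_eval 0 1) // (@INR_fact_eval 2 2) //; lra.
Qed.

Section DepthWeight.
Variables (Delta k : nat).

Definition rad : R := sqrt (INR Delta - 1).
Definition theta : R := PI / (2 * INR k + 1).
Definition wave (d : nat) : R := cos ((2 * INR d + 1) * (theta / 2)).
Definition weight (d : nat) : R := wave d / rad ^ d.
Definition adj_bound : R := 2 * rad * cos theta.

Lemma theta_gt0 : 0 < theta.
Proof. by apply: Rdiv_lt_0_compat; [exact: PI_RGT_0 | have := pos_INR k; lra]. Qed.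

Lemma wave_arg_k : (2 * INR k + 1) * (theta / 2) = PI / 2.
Proof. by rewrite /theta; field; have := pos_INR k; lra. Qed.

Lemma wave_rec d : wave d + wave d.+2 = 2 * cos theta * wave d.+1.
Proof.
rewrite /wave !S_INR.
have -> : (2 * INR d + 1) * (theta / 2)
  = (2 * (INR d + 1) + 1) * (theta / 2) - theta by field.
have -> : (2 * (INR d + 1 + 1) + 1) * (theta / 2)
  = (2 * (INR d + 1) + 1) * (theta / 2) + theta by field.
by rewrite cos_minus cos_plus; ring.
Qed.

Lemma wave_rec0 : wave 0 + wave 1 = 2 * cos theta * wave 0.
Proof.
rewrite /wave /=.
have -> : (2 * 1 + 1) * (theta / 2) = theta + theta / 2 by field.
have -> : (2 * 0 + 1) * (theta / 2) = theta / 2 by field.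
rewrite -{1}[theta / 2]Ropp_involutive cos_neg.
have -> : - (theta / 2) = theta / 2 - theta by field.
by rewrite cos_minus cos_plus; ring.
Qed.

Lemma wave_gt0 d : (d < k)%nat -> 0 < wave d.
Proof.
move=> /ltP dk; have h1 := theta_gt0; have h2 := wave_arg_k.
have h3 : INR d + 1 <= INR k by rewrite -S_INR; apply: le_INR.
have h4 := pos_INR d.
by apply: cos_gt_0; nra.
Qed.

Lemma wave_ge0 d : (d <= k)%nat -> 0 <= wave d.
Proof.
move=> /leP dk; have h1 := theta_gt0; have h2 := wave_arg_k.
have h3 : INR d <= INR k by apply: le_INR.
have h4 := pos_INR d.
by apply: cos_ge_0; nra.
Qed.

Lemma wave_le d d' : (d <= d')%nat -> (d' <= k)%nat -> wave d' <= wave d.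
Proof.
move=> /leP dd' /leP d'k; have h1 := theta_gt0; have h2 := wave_arg_k.
have h3 := pos_INR d; have h4 := PI_RGT_0.
have h5 : INR d <= INR d' by apply: le_INR.
have h6 : INR d' <= INR k by apply: le_INR.
by apply: cos_decr_1; nra.
Qed.

Section Degree.
Hypothesis Delta_ge3 : (3 <= Delta)%nat.

Lemma rad_sqr : rad * rad = INR Delta - 1.
Proof.
apply: sqrt_sqrt; have : INR 3 <= INR Delta by apply/le_INR/leP.
by rewrite /=; lra.
Qed.

Lemma rad_gt1 : 1 < rad.
Proof.
have h1 := rad_sqr; have h2 : 0 <= rad by apply: sqrt_pos.
have : INR 3 <= INR Delta by apply/le_INR/leP.
by rewrite /=; nra.
Qed.

Lemma rad_pow_gt0 d : 0 < rad ^ d.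
Proof. by apply: pow_lt; have := rad_gt1; lra. Qed.

Lemma weight_rec d : weight d + (INR Delta - 1) * weight d.+2 = adj_bound * weight d.+1.
Proof.
rewrite /weight /adj_bound -rad_sqr.
have -> : wave d = 2 * cos theta * wave d.+1 - wave d.+2 by have := wave_rec d; lra.
rewrite /=; field; split; first exact/Rgt_not_eq/rad_pow_gt0.
by have := rad_gt1; lra.
Qed.

Lemma weight_gt0 d : (d < k)%nat -> 0 < weight d.
Proof. by move=> dk; apply: Rdiv_lt_0_compat; [exact: wave_gt0 | exact: rad_pow_gt0]. Qed.

Lemma weight_ge0 d : (d <= k)%nat -> 0 <= weight d.
Proof.
move=> dk; apply: Rmult_le_pos; first exact: wave_ge0.
exact/Rlt_le/Rinv_0_lt_compat/rad_pow_gt0.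
Qed.

Lemma weight_le d d' : (d <= d')%nat -> (d' <= k)%nat -> weight d' <= weight d.
Proof.
move=> dd' d'k; rewrite /weight /Rdiv.
have inv_le : / rad ^ d' <= / rad ^ d.
  apply: Rinv_le_contravar; first exact: rad_pow_gt0.
  by apply: Rle_pow; [have := rad_gt1; lra | apply/leP].
have := Rinv_0_lt_compat _ (rad_pow_gt0 d'); have := wave_le dd' d'k.
have := wave_ge0 d'k; nra.
Qed.

Section LargeDegreeOrHeight.
Hypothesis Delta_or_height : (4 <= Delta)%nat \/ (Delta = 3%nat /\ (4 <= k)%nat).
Hypothesis k_ge2 : (2 <= k)%nat.

Lemma cos_theta_gt : 2 * rad - rad * rad + 1 < 2 * cos theta.
Proof.
have s2 := rad_sqr; have s1 := rad_gt1; have pi_ub := PI_le_16_5; have pi_gt0 := PI_RGT_0.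
have theta_le n : (n <= k)%nat -> theta <= PI / (2 * INR n + 1).
  move=> /leP/le_INR hn; apply: Rmult_le_compat_l; first lra.
  by apply: Rinv_le_contravar; have := pos_INR n; lra.
have cos_lb t : theta <= t -> t <= 1 -> 2 - t * t <= 2 * cos theta.
  move=> ht t1; have th0 := theta_gt0.
  have : 1 - theta * theta / 2 <= cos theta.
    by apply: cos_ge_1_sub_sqr_half; have := PI2_1; split; lra.
  nra.
have th5 : theta <= 16 / 25 by have /= := theta_le 2%nat k_ge2; lra.
case: Delta_or_height => [D4 | [D3 k4]].
- have /= := le_INR _ _ (leP D4); case: (Nat.eq_dec Delta 4) => [E4 | D5] hD4.
  + rewrite E4 /= in s2; have := cos_lb _ th5 ltac:(lra).
    (* rational upper bounds for sqrt 3 and, below, sqrt 2 *)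
    have : rad <= 17321 / 10000 by nra.
    lra.
  + have /= : INR 5 <= INR Delta by apply/le_INR/leP; lia.
    have := cos_lb _ th5 ltac:(lra); nra.
- rewrite D3 /= in s2.
  have th9 : theta <= 16 / 45 by have /= := theta_le 4%nat k4; lra.
  have := cos_lb _ th9 ltac:(lra).
  have : rad <= 14143 / 10000 by nra.
  lra.
Qed.

Lemma weight_cycle : 2 * weight 0 + (INR Delta - 2) * weight 1 < adj_bound * weight 0.
Proof.
have w0 : 0 < wave 0 by apply: wave_gt0; lia.
have s1 := rad_gt1; have key := cos_theta_gt.
rewrite /weight /adj_bound /= Rdiv_1_r Rmult_1_r.
rewrite (_ : INR Delta - 2 = rad * rad - 1); last by rewrite rad_sqr; lra.
have -> : wave 1 = (2 * cos theta - 1) * wave 0 by have := wave_rec0; lra.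
apply: (Rmult_lt_reg_r rad); first lra.
have -> : (2 * wave 0 + (rad * rad - 1) * ((2 * cos theta - 1) * wave 0 / rad)) * rad
  = wave 0 * (2 * rad + (rad * rad - 1) * (2 * cos theta - 1)) by field; lra.
nra.
Qed.

End LargeDegreeOrHeight.
End Degree.
End DepthWeight.

Section RealSums.
Variable V : finType.

Lemma sumR_le (P : pred V) (F G : V -> R) :
  (forall v, P v -> F v <= G v) ->
  \big[Rplus/0]_(v | P v) F v <= \big[Rplus/0]_(v | P v) G v.
Proof. by move=> FG; apply/RleP/ler_sum => v Pv; apply/RleP/FG. Qed.

Lemma sumR_lt (P : pred V) (F G : V -> R) v0 :
  (forall v, P v -> F v <= G v) -> P v0 -> F v0 < G v0 ->
  \big[Rplus/0]_(v | P v) F v < \big[Rplus/0]_(v | P v) G v.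
Proof.
move=> FG P0 FG0; rewrite (bigD1 v0 P0) [X in _ < X](bigD1 v0 P0) /=.
by apply: Rplus_lt_le_compat => //; apply: sumR_le => v /andP [Pv _]; apply: FG.
Qed.

Lemma sumR_const (P : pred V) (x : R) : \big[Rplus/0]_(v | P v) x = INR #|P| * x.
Proof. by rewrite sumr_const INRE RmultE mulr_natl. Qed.

Lemma Cmod_sum_le (w : V -> R) (z : V -> C) : (forall v, 0 <= w v) ->
  Cmod (\big[Rplus/0]_v (w v * (z v).1), \big[Rplus/0]_v (w v * (z v).2))
  <= \big[Rplus/0]_v (w v * Cmod (z v)).
Proof.
move=> w_ge0; apply: (big_rec3 (fun a b s => Cmod (a, b) <= s)).
  by rewrite -[(0, 0)]/(RtoC 0) Cmod_0; lra.
move=> v a b s _ IH.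
have -> : (w v * (z v).1 + a, w v * (z v).2 + b) = (RtoC (w v) * z v + (a, b))%C.
  by case: (z v) => x y; apply: injective_projections; rewrite /=; ring.
apply: Rle_trans (Cmod_triangle _ _) _.
by rewrite Cmod_mult Cmod_R Rabs_pos_eq //; lra.
Qed.

End RealSums.

Section SubinvariantVector.
Variables (V : finType) (M : V -> V -> R) (E : rel V) (S : pred V) (f : V -> R) (r : R).
Hypothesis M_ge0 : forall u v, 0 <= M u v.
Hypothesis M_gt0 : forall u v, E u v -> 0 < M u v.
Hypothesis f_gt0 : forall u, 0 < f u.
Hypothesis Mf_le : forall u, mxv M f u <= r * f u.
Hypothesis Mf_lt : forall u, S u -> mxv M f u < r * f u.
Hypothesis S_reachable : forall u, exists2 s, S s & connect E u s.

Lemma eigenvector_Cmod_subinvariant a b (x y : V -> R) :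
  (forall u, mxv M x u = a * x u - b * y u /\ mxv M y u = b * x u + a * y u) ->
  forall u, Cmod (a, b) * Cmod (x u, y u) <= mxv M (fun v => Cmod (x v, y v)) u.
Proof.
move=> eig u; rewrite -Cmod_mult.
have -> : ((a, b) * (x u, y u))%C = (mxv M x u, mxv M y u).
  by case: (eig u) => -> ->; apply: injective_projections; rewrite /=; ring.
exact: (Cmod_sum_le (fun v => (x v, y v))).
Qed.

Section Saturation.
Variables (rho T : R) (m : V -> R).
Hypothesis r_le_rho : r <= rho.
Hypothesis T_gt0 : 0 < T.
Hypothesis m_le : forall u, m u <= T * f u.
Hypothesis m_sub : forall u, rho * m u <= mxv M m u.

Lemma mxv_le_scale u : mxv M m u <= T * mxv M f u.
Proof.
rewrite /mxv big_distrr /=; apply: sumR_le => v _.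
by have := Rmult_le_compat_l _ _ _ (M_ge0 u v) (m_le v); lra.
Qed.

Lemma saturated_mxv u : m u = T * f u ->
  mxv M m u = T * mxv M f u /\ mxv M f u = r * f u.
Proof.
move=> mu; have := m_sub u; have := mxv_le_scale u; have := Mf_le u; have := f_gt0 u.
move=> fu Mf Mm sub.
have : T * mxv M f u <= T * (r * f u) by apply: Rmult_le_compat_l; lra.
have : r * (T * f u) <= rho * (T * f u) by apply: Rmult_le_compat_r; nra.
rewrite -mu; split; nra.
Qed.

Lemma saturated_notin u : m u = T * f u -> ~~ S u.
Proof.
move=> /saturated_mxv [_ Mf]; apply/negP => /Mf_lt; lra.
Qed.

Lemma saturated_edge u w : m u = T * f u -> E u w -> m w = T * f w.
Proof.
move=> /saturated_mxv [Mm _] Euw; apply: Rle_antisym; first exact: m_le.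
apply: Rnot_lt_le => mw; suff : mxv M m u < T * mxv M f u by lra.
rewrite /mxv big_distrr /=; apply: (@sumR_lt _ _ _ _ w) => // [v _|].
  by have := Rmult_le_compat_l _ _ _ (M_ge0 u v) (m_le v); lra.
by have := Rmult_lt_compat_l _ _ _ (M_gt0 Euw) mw; lra.
Qed.

Lemma saturated_connect u w : m u = T * f u -> connect E u w -> m w = T * f w.
Proof.
move=> mu /connectP [p Ep ->]; elim: p u Ep mu => [|v p IH] u //=.
by move=> /andP [Euv Ep] mu; apply: IH Ep _; apply: saturated_edge Euv.
Qed.

End Saturation.

Lemma spectral_radius_lt_subinvariant : spectral_radius_lt M r.
Proof.
move=> a b [x [y [[v0 xy0] eig]]].
pose m v := Cmod (x v, y v).
have -> : sqrt (a * a + b * b) = Cmod (a, b) by rewrite /Cmod /=; congr sqrt; ring.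
have m_sub := eigenvector_Cmod_subinvariant eig.
have [u0 _ u0_max] := @Order.TotalTheory.arg_maxP _ _ _ v0 xpredT (fun v => m v / f v) isT.
pose T := m u0 / f u0.
have m_le u : m u <= T * f u.
  have fu := f_gt0 u; have /RleP := u0_max u isT; rewrite -/T => le_T.
  have -> : m u = m u / f u * f u by field; lra.
  by apply: Rmult_le_compat_r; lra.
have T_gt0 : 0 < T.
  have m0 : 0 < m v0.
    apply/Cmod_gt_0 => /pair_equal_spec [x0 y0].
    by case: xy0; rewrite ?x0 ?y0.
  by have := m_le v0; have := f_gt0 v0; nra.
have mu0 : m u0 = T * f u0 by rewrite /T; field; have := f_gt0 u0; lra.
case: (Rlt_le_dec (Cmod (a, b)) r) => // r_le.
have [s Ss u0s] := S_reachable u0.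
have ms := saturated_connect r_le T_gt0 m_le m_sub mu0 u0s.
by move: (saturated_notin r_le T_gt0 m_le m_sub ms); rewrite Ss.
Qed.

End SubinvariantVector.

Section UnicyclicGraph.
Local Open Scope nat_scope.
Variables (V : finType) (e : rel V) (c : seq V).
Hypothesis e_simple : simple_graph e.
Hypothesis e_unicyclic : unicyclic e.
Hypothesis c_is_cycle : is_cycle e c.

Lemma e_sym : symmetric e. Proof. by case: e_simple. Qed.
Lemma e_irr x : e x x = false. Proof. by case: e_simple => irr _; apply: irr. Qed.

Lemma c_uniq : uniq c. Proof. by case/and3P: c_is_cycle. Qed.
Lemma c_cycle : cycle e c. Proof. by case/and3P: c_is_cycle. Qed.

Lemma c_nonempty : exists v, v \in c.
Proof. by case/and3P: c_is_cycle; case: (c) => [|v s] //= _ _ _; exists v; rewrite inE eqxx. Qed.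

Definition remove_edge (x y : V) : rel V :=
  fun a b => e a b && ~~ (((a == x) && (b == y)) || ((a == y) && (b == x))).

Lemma remove_edge_sym x y : symmetric (remove_edge x y).
Proof.
move=> a b; rewrite /remove_edge e_sym; congr (_ && ~~ _).
by rewrite orbC; congr (_ || _); rewrite andbC.
Qed.

Lemma connect_remove_edge_sym x y a b :
  connect (remove_edge x y) a b = connect (remove_edge x y) b a.
Proof. exact/sym_connect_sym/remove_edge_sym. Qed.

(* A path from x to y avoiding the edge xy closes up into a second cycle through xy. *)
Lemma bridge_of_not_cyc_edge x y :
  e x y -> ~~ cyc_edge c x y -> ~~ connect (remove_edge x y) x y.
Proof.
move=> exy ncyc; apply/negP => /connectP [p pth lst].
move: lst; case/shortenP: pth => p' pth' uq _ lst.
have yx : y != x by apply: contraTneq exy => ->; rewrite e_irr.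
have sz : 2 < size (x :: p').
  case: p' pth' uq lst => [|z [|z' q]] //=; first by move=> _ _ yx'; rewrite yx' eqxx in yx.
  by move=> /andP [rxz _] _ yz; rewrite -yz /remove_edge exy !eqxx /= in rxz.
have cyc' : cycle e (x :: p').
  rewrite /= rcons_path -lst e_sym exy andbT.
  by apply: sub_path pth' => a b /andP [].
have ic' : is_cycle e (x :: p') by rewrite /is_cycle uq sz cyc'.
have ce' : cyc_edge (x :: p') x y.
  apply/orP; right; apply/andP; split; first by rewrite lst mem_last.
  by have := cycle_next uq; rewrite /= rcons_path -lst => /andP [_].
case: e_unicyclic => _ [c0 [_ uniq_cycle]].
by move: ncyc; rewrite (uniq_cycle c c_is_cycle) -(uniq_cycle _ ic') ce'.
Qed.

Lemma cycle_connect_remove_edge x y : ~~ cyc_edge c x y ->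
  {in c &, forall a b, connect (remove_edge x y) a b}.
Proof.
move=> nc.
have step a b : next c a == b -> connect (remove_edge x y) a b.
  move=> /eqP <-; case ac: (a \in c); last by rewrite next_nth ac.
  apply: connect1; rewrite /remove_edge next_cycle ?c_cycle //=.
  apply/negP => /orP [/andP [/eqP ax /eqP ny] | /andP [/eqP ay /eqP nx]];
    apply: (negP nc); rewrite /cyc_edge; first by rewrite -ax ac ny eqxx.
  by rewrite -ay ac nx eqxx orbT.
have from_head z : z \in c -> connect (remove_edge x y) (head z c) z.
  have := cycle_next c_uniq; case Ec: c => [|h t] //= hp zc.
  have hz : fconnect (next (h :: t)) h z.
    by apply: (path_connect hp); rewrite in_cons mem_rcons zc orbT.
  by apply: (connect_sub _ hz) => u v /= /eqP <-; apply: step; rewrite Ec.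
move=> a b ac bc; have := from_head a ac; have := from_head b bc.
have -> : head a c = head b c by case: (c) ac.
by move=> hb ha; apply: connect_trans hb; rewrite connect_remove_edge_sym.
Qed.

Fixpoint ball (n : nat) : {set V} :=
  if n is n'.+1 then ball n' :|: [set v | [exists w in ball n', e v w]]
  else [set v | v \in c].

Lemma ball_step n a b : a \in ball n -> e b a -> b \in ball n.+1.
Proof.
by move=> an eba; rewrite /= in_setU inE; apply/orP; right; apply/existsP; exists a; rewrite an.
Qed.

Lemma ball_exhaustive u : exists n, u \in ball n.
Proof.
have [c0 c0c] := c_nonempty; case: e_unicyclic => conn _.
have /connectP [p pth E] := conn u c0; rewrite {}E in c0c.
elim: p u pth c0c => [|w p IH] u /=; first by exists 0; rewrite inE.
by case/andP=> euw /IH H /H [n hn]; exists n.+1; apply: ball_step hn euw.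
Qed.

Definition depth u : nat := ex_minn (ball_exhaustive u).

Lemma depth_ball u : u \in ball (depth u).
Proof. by rewrite /depth; case: ex_minnP. Qed.

Lemma depth_min u n : u \in ball n -> depth u <= n.
Proof. by rewrite /depth; case: ex_minnP => m _ H /H. Qed.

Lemma depth_eq0 u : (depth u == 0) = (u \in c).
Proof.
apply/idP/idP => [/eqP d0 | uc]; first by have := depth_ball u; rewrite d0 inE.
by rewrite -leqn0; apply: depth_min; rewrite inE.
Qed.

Lemma depth_edge u w : e u w -> depth u <= (depth w).+1.
Proof. by move=> euw; apply/depth_min/ball_step/euw/depth_ball. Qed.

Lemma depth_parent u : u \notin c -> exists2 w, e u w & (depth w).+1 = depth u.
Proof.
move=> nuc; have := depth_ball u; have := @depth_min u; have : depth u != 0 by rewrite depth_eq0.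
case du: (depth u) => [|m] //= _ dmin; rewrite in_setU => /orP [/dmin | ]; first by rewrite ltnn.
rewrite inE => /existsP [w /andP [wm euw]].
exists w => //; apply/eqP; rewrite eqn_leq ltnS depth_min //=.
by have := depth_edge euw; rewrite du ltnS.
Qed.

Lemma not_cyc_edge_of_notin u w : u \notin c -> ~~ cyc_edge c u w && ~~ cyc_edge c w u.
Proof.
move=> nuc; rewrite /cyc_edge (negbTE nuc) /= orbF.
by apply/andP; split; apply/negP => /andP [wc /eqP E]; move: nuc; rewrite -E mem_next wc.
Qed.

(* The parents of x are strictly shallower than u, so descending along them never meets u. *)
Lemma descend_to_cycle u w x : depth x <= depth u -> x != u ->
  exists2 a, a \in c & connect (remove_edge u w) x a.
Proof.
have [n hn] : exists n, depth x <= n by exists (depth x).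
elim: n x hn => [|n IH] x hn hu xu; first by exists x; rewrite // -depth_eq0 -leqn0.
case xc: (x \in c); first by exists x.
have [y exy dy] := depth_parent (negbT xc).
have yu : y != u by apply: contraTneq hu => <-; rewrite -dy ltnn.
have dyn : depth y <= n by rewrite -ltnS dy.
have dyu : depth y <= depth u by apply: leq_trans hu; rewrite -dy.
have [a ac ya] := IH y dyn dyu yu.
exists a => //; apply: connect_trans ya; apply: connect1.
by rewrite /remove_edge exy (negbTE xu) (negbTE yu) /= andbF.
Qed.

Definition shallow_nbr (u : V) : pred V := [pred v | e u v && (depth v <= depth u)].

Lemma card_shallow_nbr_notin u : u \notin c -> #|shallow_nbr u| <= 1.
Proof.
move=> nuc; rewrite leqNgt; apply/negP.
move=> /card_gt1P [w1 [w2 [/andP [euw1 d1] /andP [euw2 d2] w12]]].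
have nc : ~~ cyc_edge c u w1 by case/andP: (not_cyc_edge_of_notin w1 nuc).
apply: (negP (bridge_of_not_cyc_edge euw1 nc)).
have uw1 : u != w1 by apply: contraTneq euw1 => <-; rewrite e_irr.
have w2u : w2 != u by apply: contraTneq euw2 => ->; rewrite e_irr.
have w1u : w1 != u by rewrite eq_sym.
have [a2 a2c w2a2] := descend_to_cycle w1 d2 w2u.
have [a1 a1c w1a1] := descend_to_cycle w1 d1 w1u.
apply: (@connect_trans _ _ w2).
  by apply: connect1; rewrite /remove_edge euw2 eqxx (negbTE uw1) eq_sym (negbTE w12).
apply: (connect_trans w2a2); apply: (connect_trans (cycle_connect_remove_edge nc a2c a1c)).
by rewrite connect_remove_edge_sym.
Qed.

Lemma card_shallow_nbr_cycle u : u \in c -> #|shallow_nbr u| <= 2.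
Proof.
move=> uc; have du : depth u = 0 by apply/eqP; rewrite depth_eq0.
apply: (@leq_trans #|[set next c u; prev c u]|); last by rewrite cards2; case: (_ != _).
apply/subset_leq_card/subsetP => v; rewrite !inE du leqn0 depth_eq0 => /andP [euv vc].
apply/negPn/negP; rewrite negb_or => /andP [n1 n2].
have nc : ~~ cyc_edge c u v.
  rewrite /cyc_edge eq_sym (negbTE n1) andbF /=; apply/negP => /andP [_ /eqP E].
  by move: n2; rewrite -E prev_next ?c_uniq // eqxx.
exact: (negP (bridge_of_not_cyc_edge euv nc)) (cycle_connect_remove_edge nc uc vc).
Qed.

Lemma forest_root u : exists2 v, v \in c & connect (forest_rel e c) v u.
Proof.
have [n hn] : exists n, depth u <= n by exists (depth u).
elim: n u hn => [|n IH] u hn; first by exists u; rewrite // -depth_eq0 -leqn0.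
case uc: (u \in c); first by exists u.
have [w euw dw] := depth_parent (negbT uc).
have dwn : depth w <= n by rewrite -ltnS dw.
have [v vc vw] := IH w dwn.
exists v => //; apply: (connect_trans vw); apply: connect1.
by rewrite /forest_rel e_sym euw; case/andP: (not_cyc_edge_of_notin w (negbT uc)).
Qed.

Lemma ball_path m v p : path e v p -> v \in ball m -> last v p \in ball (m + size p).
Proof.
elim: p v m => [|w p IH] v m /=; first by rewrite addn0.
case/andP=> evw pw vm; rewrite addnS -addSn; apply: IH pw _.
by apply: ball_step vm _; rewrite e_sym.
Qed.

Lemma depth_le_dist v u : v \in c -> connect (forest_rel e c) v u ->
  depth u <= Defs.dist (forest_rel e c) v u.
Proof.
move=> vc /connectP [p pth lst]; move: lst; case/shortenP: pth => p' pth' uq _ lst.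
have has_walk : has (walk_len (forest_rel e c) v u) (iota 0 #|V|).
  apply/hasP; exists (size p').
    by rewrite mem_iota /=; have := max_card (mem (v :: p')); rewrite (card_uniqP uq).
  by apply/existsP; exists (in_tuple p'); rewrite /= pth' lst eqxx.
have := nth_find 0 has_walk; rewrite has_find size_iota in has_walk.
rewrite nth_iota // add0n -/(Defs.dist _ v u) => /existsP [q /andP [q_path /eqP q_last]].
have vq : path e v q by apply: sub_path q_path => a b /andP [].
have v0 : v \in ball 0 by rewrite inE.
by have := ball_path vq v0; rewrite q_last size_tuple add0n => /depth_min.
Qed.

Lemma depth_lt_height u : depth u < height e c.
Proof.
have [v vc vu] := forest_root u.
rewrite /height ltnS; apply: (leq_trans (depth_le_dist vc vu)).
apply: (@leq_trans (tree_height e c v)); first exact: (leq_bigmax_cond u).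
exact: (leq_bigmax_cond v).
Qed.

Lemma height_ge2 : 3 <= max_deg e -> 2 <= height e c.
Proof.
move=> deg3; have [v deg_v] : exists v, 2 < deg e v.
  apply/existsP; move: deg3; apply: contraLR; rewrite negb_exists => /forallP deg_le2.
  by rewrite -leqNgt; apply/bigmax_leqP => v _; rewrite leqNgt deg_le2.
suff [w w_gt0] : exists w, 0 < depth w by apply: leq_ltn_trans (depth_lt_height w).
case vc: (v \in c); last by exists v; rewrite lt0n depth_eq0 vc.
case: (pickP [pred w | e v w && (depth v < depth w)]) => [w /andP [_ vw] | none].
  by exists w; apply: leq_ltn_trans vw.
have := card_shallow_nbr_cycle vc; rewrite leqNgt => /negP; case.
apply/(leq_trans deg_v)/subset_leq_card/subsetP => w; rewrite !inE.
by have /= := none w; case: (e v w) => //= /negbT; rewrite -leqNgt.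
Qed.

End UnicyclicGraph.

Section AAlpha.
Variables (V : finType) (e : rel V) (alpha : R).

Lemma mxv_A_alpha (F : V -> R) u :
  mxv (A_alpha e alpha) F u =
  alpha * INR (deg e u) * F u + (1 - alpha) * \big[Rplus/0]_(v | e u v) F v.
Proof.
rewrite /mxv /A_alpha; under eq_bigr do rewrite Rmult_plus_distr_r.
rewrite big_split /=; congr (_ + _).
  rewrite (bigD1 u) //= eqxx big1 => [|v /negbTE vu]; first ring.
  by rewrite eq_sym vu; ring.
rewrite big_distrr /= [in RHS]big_mkcond /=; apply: eq_bigr => v _.
by case: (e u v); ring.
Qed.

Lemma A_alpha_ge0 u v : 0 <= alpha -> alpha <= 1 -> 0 <= A_alpha e alpha u v.
Proof.
move=> a0 a1; rewrite /A_alpha; apply: Rplus_le_le_0_compat.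
  by case: (u == v); [apply: Rmult_le_pos => //; apply: pos_INR | lra].
by apply: Rmult_le_pos; [lra | case: (e u v); lra].
Qed.

Lemma A_alpha_edge u v : irreflexive e -> e u v -> A_alpha e alpha u v = 1 - alpha.
Proof.
move=> irr euv; rewrite /A_alpha euv.
have -> : (u == v) = false by apply: contraTF euv => /eqP ->; rewrite irr.
ring.
Qed.

End AAlpha.

Section TestVector.
Variables (V : finType) (e : rel V) (c : seq V) (alpha : R).
Hypothesis e_simple : simple_graph e.
Hypothesis e_unicyclic : unicyclic e.
Hypothesis c_is_cycle : is_cycle e c.
Hypothesis Delta_ge3 : (3 <= max_deg e)%nat.
Hypothesis alpha_ge0 : 0 <= alpha.
Hypothesis alpha_lt1 : alpha < 1.
Hypothesis Delta_or_height :
  (4 <= max_deg e)%nat \/ (max_deg e = 3%nat /\ (4 <= height e c)%nat).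

Local Notation Delta := (max_deg e).
Local Notation k := (height e c).
Local Notation depth := (depth e_unicyclic c_is_cycle).
Local Notation g := (weight Delta k).
Local Notation f u := (g (depth u)).
Local Notation shallow_nbr := (shallow_nbr e_unicyclic c_is_cycle).
Local Notation depth_lt_k := (depth_lt_height e_simple e_unicyclic c_is_cycle).

Lemma test_vector_gt0 u : 0 < f u.
Proof. exact/weight_gt0/depth_lt_k. Qed.

Lemma neighbour_weight_le u v : e u v ->
  f v <= g (depth u).+1 +
         (if v \in shallow_nbr u then g (depth u).-1 - g (depth u).+1 else 0).
Proof.
move=> euv; have := depth_lt_k v; have := depth_lt_k u.
have := depth_edge e_unicyclic c_is_cycle euv; rewrite inE /= euv /=.
case: ifP => dvu hvu huk hvk.
- have : f v <= g (depth u).-1 by apply: weight_le; lia.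
  have : g (depth u).+1 <= g (depth u).-1 by apply: weight_le; lia.
  lra.
- have : f v <= g (depth u).+1 by apply: weight_le; lia.
  lra.
Qed.

Lemma neighbour_sum_le u :
  \big[Rplus/0]_(v | e u v) f v <=
  INR Delta * g (depth u).+1 + INR #|shallow_nbr u| * (g (depth u).-1 - g (depth u).+1).
Proof.
apply: Rle_trans (sumR_le (neighbour_weight_le (u := u))) _.
rewrite big_split /= -big_mkcondr /= !sumR_const.
have -> : #|[pred v | e u v]| = deg e u by [].
have -> : #|[pred v | e u v && (v \in shallow_nbr u)]| = #|shallow_nbr u|.
  by apply: eq_card => v; rewrite !inE; case: (e u v).
have : INR (deg e u) <= INR Delta by apply/le_INR/leP/leq_bigmax.
have : 0 <= g (depth u).+1 by apply: weight_ge0; have := depth_lt_k u; lia.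
nra.
Qed.

Lemma neighbour_sum_notin u : u \notin c ->
  \big[Rplus/0]_(v | e u v) f v <= adj_bound Delta k * f u.
Proof.
move=> uc; have := neighbour_sum_le u.
have := card_shallow_nbr_notin e_simple e_unicyclic c_is_cycle uc.
have := depth_lt_k u; have : depth u != 0%nat by rewrite depth_eq0.
case: (depth u) => [|d] //= _ dk /leP/le_INR /= up1.
have : g d.+2 <= g d by apply: weight_le; lia.
rewrite -(weight_rec k Delta_ge3); nra.
Qed.

Lemma neighbour_sum_cycle u : u \in c ->
  \big[Rplus/0]_(v | e u v) f v < adj_bound Delta k * f u.
Proof.
move=> uc; have := neighbour_sum_le u.
have := card_shallow_nbr_cycle e_simple e_unicyclic c_is_cycle uc.
rewrite (eqP (_ : depth u == 0%nat)) ?depth_eq0 //= => /leP/le_INR /= up2.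
have k2 := height_ge2 e_simple e_unicyclic c_is_cycle Delta_ge3.
have : g 1 <= g 0 by apply: weight_le; lia.
have := weight_cycle Delta_ge3 Delta_or_height k2; nra.
Qed.

Local Notation r := (alpha * INR Delta + (1 - alpha) * adj_bound Delta k).

Lemma A_alpha_test_gap u :
  (1 - alpha) * (adj_bound Delta k * f u - \big[Rplus/0]_(v | e u v) f v)
  <= r * f u - mxv (A_alpha e alpha) (fun v => f v) u.
Proof.
rewrite mxv_A_alpha.
have : alpha * INR (deg e u) * f u <= alpha * INR Delta * f u.
  apply/Rmult_le_compat_r/Rmult_le_compat_l => //; first exact/Rlt_le/test_vector_gt0.
  exact/le_INR/leP/leq_bigmax.
lra.
Qed.

Lemma A_alpha_test_le u : mxv (A_alpha e alpha) (fun v => f v) u <= r * f u.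
Proof.
have := A_alpha_test_gap u.
case uc: (u \in c); [have := neighbour_sum_cycle uc | have := neighbour_sum_notin (negbT uc)].
all: nra.
Qed.

Lemma A_alpha_test_lt u : u \in c -> mxv (A_alpha e alpha) (fun v => f v) u < r * f u.
Proof. by move=> uc; have := A_alpha_test_gap u; have := neighbour_sum_cycle uc; nra. Qed.

Lemma spectral_radius_A_alpha_lt : spectral_radius_lt (A_alpha e alpha) r.
Proof.
apply: (@spectral_radius_lt_subinvariant _ _ e (mem c) (fun v => f v)).
- by move=> u v; apply: A_alpha_ge0; lra.
- by move=> u v euv; rewrite A_alpha_edge //; [lra | case: e_simple].
- exact: test_vector_gt0.
- exact: A_alpha_test_le.
- exact: A_alpha_test_lt.
- move=> u; have [c0 c0c] := c_nonempty c_is_cycle.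
  by exists c0 => //; case: e_unicyclic => conn _; apply: conn.
Qed.

End TestVector.

Local Close Scope R_scope.

Theorem mainTheorem10 (V : finType) (e : rel V) (c : seq V) (alpha : R) :
  simple_graph e -> unicyclic e -> is_cycle e c ->
  3 <= max_deg e ->
  (0 <= alpha)%R -> (alpha < 1)%R ->
  (4 <= max_deg e \/ (max_deg e = 3 /\ 4 <= height e c)) ->
  spectral_radius_lt (A_alpha e alpha)
    (alpha * INR (max_deg e)
     + 2 * (1 - alpha) * sqrt (INR (max_deg e) - 1)
       * cos (PI / (2 * INR (height e c) + 1)))%R.
Proof.
move=> e_simple e_unicyclic c_is_cycle Delta_ge3 alpha_ge0 alpha_lt1 Delta_or_height.
have -> : (alpha * INR (max_deg e) + 2 * (1 - alpha) * sqrt (INR (max_deg e) - 1)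
    * cos (PI / (2 * INR (height e c) + 1)))%R
  = (alpha * INR (max_deg e) + (1 - alpha) * adj_bound (max_deg e) (height e c))%R.
  by rewrite /adj_bound /rad /theta; ring.
exact: spectral_radius_A_alpha_lt.
Qed.
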